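(* Let $l \ge 3$ be an integer and $d = 4l$. For $T\subseteq[d]$ write $e_T\in\{0,1\}^d$ for the indicator vector of $T$. Let the demonstration set $D$ consist of all vectors $e_{T_1\cup T_2}$ with $T_1\subseteq[2l]$, $|T_1| = l-1$, and $T_2\subseteq\{2l+1,\dots,4l\}$, $|T_2| = 1$ (the entire support of the demonstration distribution). Let the query $e_q = e_T$ with $T$ drawn uniformly among subsets of $[2l]$ of size $l$. Let $\theta\in\mathbb R^d$ have i.i.d. entries uniform on $[0,1]$, independent of $e_q$, and let $K=2$. Let $L$ be the expected prediction loss $\mathbb E\big[\langle \theta - E^\dagger E\theta, e_q\rangle^2\big]$ when the two demonstrations (rows of $E$) are selected by TopK, and $L'$ the same quantity when they are selected by TopK-Div with hyperparameter $\alpha$, where the expectation is over $\theta$, $e_q$, and the random tie-breaking in the selection. Then $L > L'$ whenever $1 - 1/l \le \alpha < 1$.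
   Context: Cosine similarity: $\mathrm{Sim}(u,v) = \langle u,v\rangle/(\|u\|\|v\|)$. For a vector $e$ and a nonempty finite set $S$ of vectors, $\mathrm{Div}(e,S) = 1 - \frac{1}{|S|}\sum_{s\in S}\mathrm{Sim}(e,s)$, and $\mathrm{Div}(e,\emptyset)=0$. TopK selection: choose the $K$ elements of $D$ with the largest $\mathrm{Sim}(\cdot,e_q)$, ties broken uniformly at random. TopK-Div selection with parameter $\alpha$: start with $S=\emptyset$ and, while $|S|<K$, add an element $e\in D\setminus S$ maximizing $\alpha\,\mathrm{Sim}(e,e_q) + (1-\alpha)\mathrm{Div}(e,S)$ (ties broken uniformly at random); in particular the first selected element maximizes similarity to $e_q$. Given the selected demonstrations $e_{j_1},\dots,e_{j_K}$, $E = [e_{j_1},\dots,e_{j_K}]^\top\in\mathbb R^{K\times d}$, $E^\dagger$ is its Moore–Penrose pseudoinverse, the model's prediction on query $e_q$ is $\langle e_q, E^\dagger E\theta\rangle$ (the min-norm interpolating linear regression solution), the true label is $\langle\theta,e_q\rangle$, and the prediction loss is $\langle \theta - E^\dagger E\theta, e_q\rangle^2$. *)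

From HB Require Import structures.
From mathcomp Require Import all_boot all_order all_algebra.
From mathcomp Require Import all_classical all_reals all_analysis.
Set Implicit Arguments.
Unset Strict Implicit.
Unset Printing Implicit Defensive.
Import Order.TTheory GRing.Theory Num.Theory.
Import numFieldNormedType.Exports.
Local Open Scope ring_scope.

Section Defs.
Variable R : realType.

Definition inner (d : nat) (u v : 'rV[R]_d) : R := (u *m v^T) 0 0.

Definition enorm (d : nat) (u : 'rV[R]_d) : R := Num.sqrt (inner u u).

Definition Sim (d : nat) (u v : 'rV[R]_d) : R := inner u v / (enorm u * enorm v).

(* Div(e,S) for S given as a (duplicate-free) list of vectors; Div(e,[]) = 0 *)
Definition Div (d : nat) (e : 'rV[R]_d) (S : seq 'rV[R]_d) : R :=
  if S is [::] then 0
  else 1 - (size S)%:R^-1 * \sum_(s <- S) Sim e s.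

Definition indic (d : nat) (T : {set 'I_d}) : 'rV[R]_d :=
  \row_(i < d) (if i \in T then 1 else 0).

Definition is_MP_pinv (m n : nat) (E : 'M[R]_(m, n)) (X : 'M[R]_(n, m)) : Prop :=
  [/\ E *m X *m E = E, X *m E *m X = X,
      (E *m X)^T = E *m X & (X *m E)^T = X *m E].

Definition pinv (m n : nat) (E : 'M[R]_(m, n)) : 'M[R]_(n, m) :=
  xget 0 [set X | is_MP_pinv E X].

Definition demo_mx (d K : nat) (I : finType) (e : I -> 'rV[R]_d)
  (t : K.-tuple I) : 'M[R]_(K, d) := \matrix_(k < K) e (tnth t k).

Definition pred_loss (d K : nat) (E : 'M[R]_(K, d)) (theta eq : 'rV[R]_d) : R :=
  inner (theta - (pinv E *m E *m theta^T)^T) eq ^+ 2.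

Fixpoint unif_iter (n : nat) (f : (nat -> R) -> R) : R :=
  match n with
  | 0 => f (fun _ => 0)
  | n'.+1 =>
      \int[@lebesgue_measure R]_(x in `[0%R, 1%R]%classic)
        unif_iter n' (fun g => f (fun i => if i == n' then x else g i))
  end.

Definition E_theta (d : nat) (F : 'rV[R]_d -> R) : R :=
  unif_iter d (fun g => F (\row_(i < d) g (i : nat))).

Section Selection.
Variables (d K : nat) (I : finType) (e : I -> 'rV[R]_d) (D : {set I}) (eq : 'rV[R]_d).

Definition simq (x : I) : R := Sim (e x) eq.

Definition topk_valid (t : K.-tuple I) : bool :=
  [&& uniq t, all (fun x => x \in D) t &
      [forall x in D, (x \notin t) ==> all (fun y => simq x <= simq y) t]].

(* expected loss of TopK (ties uniformly at random, i.e. uniform over all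
   valid selections) *)
Definition topk_loss : R :=
  (#|[set t : K.-tuple I | topk_valid t]|%:R)^-1 *
  \sum_(t : K.-tuple I | topk_valid t)
     E_theta (fun theta => pred_loss (demo_mx e t) theta eq).

Variable alpha : R.

Definition div_score (p : seq I) (x : I) : R :=
  alpha * simq x + (1 - alpha) * Div (e x) [seq e y | y <- p].

Definition div_argmax (p : seq I) : {set I} :=
  [set x in D :\: [set y in p] |
     [forall y in D :\: [set y in p], div_score p y <= div_score p x]].

(* probability that greedy selection with uniform tie-breaking outputs t
   (in this order) *)
Definition div_prob (t : K.-tuple I) : R :=
  \prod_(k < K)
    (if tnth t k \in div_argmax (take k t)
     then (#|div_argmax (take k t)|%:R)^-1 else 0).

Definition topkdiv_loss : R :=
  \sum_(t : K.-tuple I)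
     div_prob t * E_theta (fun theta => pred_loss (demo_mx e t) theta eq).

End Selection.

Section Instance.
Variable l : nat.

Definition dim := 4 * l.

Definition first_half : {set 'I_dim} := [set i : 'I_dim | (i < 2 * l)%N].
Definition second_half : {set 'I_dim} := [set i : 'I_dim | (2 * l <= i)%N].

Definition demo_set : {set {set 'I_dim}} :=
  [set T1 :|: T2 | T1 in [set T : {set 'I_dim} | (T \subset first_half) && (#|T| == l.-1)],
                   T2 in [set T : {set 'I_dim} | (T \subset second_half) && (#|T| == 1)%N]].

Definition query_set : {set {set 'I_dim}} :=
  [set T : {set 'I_dim} | (T \subset first_half) && (#|T| == l)].

Definition avg_query (F : 'rV[R]_dim -> R) : R :=
  (#|query_set|%:R)^-1 * \sum_(T in query_set) F (indic T).

Definition L_topk : R :=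
  avg_query (fun eq => topk_loss 2 (@indic dim) demo_set eq).

Definition L_topkdiv (alpha : R) : R :=
  avg_query (fun eq => topkdiv_loss 2 (@indic dim) demo_set eq alpha).

End Instance.
End Defs.

(* Fix a query T (l points of the first half).  Every demonstration meets T in
   at most l - 1 points and its similarity to e_T is proportional to that
   overlap.  For two demonstrations A, B meeting T in l - 1 points with
   |A :&: B| = g, the loss is <theta, r>^2 where r is the residual of e_T after
   projection on span(e_A, e_B); its expectation over uniform theta is
   (sum r / 2)^2 + |r|^2 / 12, which is exactly 1/12 for g = l - 2 and larger
   for g = l - 1.  TopK picks two demonstrations of overlap l - 1, so
   g is l - 1 or l - 2, and g = l - 1 occurs with positive probability.  For
   alpha > 1/2 the diversity term forces TopK-Div to pick a second
   demonstration with g = l - 2, so its loss is exactly 1/12. *)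

From Pilot Require Import Defs.
From HB Require Import structures.
From mathcomp Require Import all_boot all_order all_algebra.
From mathcomp Require Import all_classical all_reals all_analysis.
From mathcomp Require Import ring lra zify.
Set Implicit Arguments.
Unset Strict Implicit.
Unset Printing Implicit Defensive.
Import Order.TTheory GRing.Theory Num.Theory.
Import numFieldNormedType.Exports.
Local Open Scope ring_scope.

Section UniformSquare.
Variable R : realType.

Lemma integral01_horner (p P : {poly R}) : P^`() = p ->
  Rintegral lebesgue_measure `[0%R, 1%R]%classic (horner p) = P.[1] - P.[0].
Proof.
move=> dP; rewrite /Rintegral (@continuous_FTC2 _ _ (horner P)).
- by rewrite -EFinB.
- exact: ltr01.
- by apply/continuous_subspaceT => x; exact: continuous_horner.
- split.
  + by move=> x _; exact: derivable_horner.
  + by apply: cvg_at_right_filter; exact: continuous_horner.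
  + by apply: cvg_at_left_filter; exact: continuous_horner.
- by move=> x _; rewrite -derivE dP.
Qed.

Lemma integral01_quadratic (a b c : R) :
  Rintegral lebesgue_measure `[0%R, 1%R]%classic (fun x => a + b * x + c * x ^+ 2)
  = a + b / 2 + c / 3.
Proof.
have -> : (fun x => a + b * x + c * x ^+ 2) = horner (a%:P + b *: 'X + c *: 'X^2).
  by apply/funext => x; rewrite !hornerE.
rewrite (@integral01_horner _ (a *: 'X + (b / 2) *: 'X^2 + (c / 3) *: 'X^3)).
  by rewrite !hornerD !hornerZ !hornerXn !hornerX !expr1n !expr0n /=; field.
rewrite !poly.derivD !poly.derivZ poly.derivX !poly.derivXn /= alg_polyC expr1.
rewrite -(scaler_nat 2 'X) -(scaler_nat 3 'X^2) !scalerA.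
by rewrite !divfK ?pnatr_eq0.
Qed.

Lemma unif_iter_sqr_affine n (c : R) (a : nat -> R) :
  unif_iter n (fun g => (c + \sum_(i < n) a i * g i) ^+ 2) =
  (c + \sum_(i < n) a i / 2) ^+ 2 + \sum_(i < n) a i ^+ 2 / 12.
Proof.
elim: n c => [|n IHn] c; first by rewrite /= !big_ord0 !addr0.
set S := \sum_(i < n) a i / 2; set V := \sum_(i < n) a i ^+ 2 / 12.
have last_var x : (fun g : nat -> R =>
      (c + \sum_(i < n.+1) a i * (if i == n :> nat then x else g i)) ^+ 2)
    = (fun g => (c + a n * x + \sum_(i < n) a i * g i) ^+ 2).
  apply/funext => g; rewrite big_ord_recr /= eqxx addrAC addrA.
  by under eq_bigr => i _ do rewrite (ltn_eqF (ltn_ord i)).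
rewrite /= (_ : (fun x => _) =
  (fun x => (c + S) ^+ 2 + V + 2 * (c + S) * a n * x + a n ^+ 2 * x ^+ 2)).
  by rewrite integral01_quadratic !big_ord_recr /= -/S -/V; field.
by apply/funext => x; rewrite last_var IHn -/S -/V; ring.
Qed.

End UniformSquare.

Section InnerProduct.
Variables (R : realType) (d : nat).
Implicit Types u v w : 'rV[R]_d.

Lemma innerE u v : inner u v = \sum_j u 0 j * v 0 j.
Proof. by rewrite /inner !mxE; apply: eq_bigr => j _; rewrite !mxE. Qed.

Lemma innerC u v : inner u v = inner v u.
Proof. by rewrite !innerE; apply: eq_bigr => j _; rewrite mulrC. Qed.

Lemma innerDl u v w : inner (u + v) w = inner u w + inner v w.
Proof. by rewrite !innerE -big_split; apply: eq_bigr => j _; rewrite mxE mulrDl. Qed.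

Lemma innerBl u v w : inner (u - v) w = inner u w - inner v w.
Proof. by rewrite !innerE -sumrB; apply: eq_bigr => j _; rewrite !mxE mulrBl. Qed.

Lemma innerZl (c : R) u w : inner (c *: u) w = c * inner u w.
Proof. by rewrite !innerE mulr_sumr; apply: eq_bigr => j _; rewrite mxE mulrA. Qed.

Lemma inner_indic (A B : {set 'I_d}) :
  inner (Defs.indic R A) (Defs.indic R B) = #|A :&: B|%:R.
Proof.
rewrite innerE -sum1_card natr_sum [RHS]big_mkcond; apply: eq_bigr => j _.
by rewrite !mxE inE; case: (j \in A); case: (j \in B); rewrite ?mulr1 ?mulr0.
Qed.

Lemma Sim_indic (A B : {set 'I_d}) k : #|A| = k -> #|B| = k -> (0 < k)%N ->
  Sim (Defs.indic R A) (Defs.indic R B) = #|A :&: B|%:R / k%:R.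
Proof.
move=> cA cB k_gt0; rewrite /Sim /enorm !inner_indic !finset.setIid cA cB.
by rewrite -expr2 sqr_sqrtr ?ler0n.
Qed.

Lemma sum_indic (A : {set 'I_d}) : \sum_j Defs.indic R A 0 j = #|A|%:R.
Proof.
rewrite -sum1_card natr_sum [RHS]big_mkcond; apply: eq_bigr => j _.
by rewrite mxE; case: (j \in A).
Qed.

Lemma mulmx_trmxE m n (M : 'M[R]_(m, d)) (N : 'M[R]_(n, d)) i j :
  (M *m N^T) i j = inner (row i M) (row j N).
Proof. by rewrite innerE !mxE; apply: eq_bigr => k _; rewrite !mxE. Qed.

Lemma E_theta_inner_sqr (r : 'rV[R]_d) :
  E_theta (fun th => inner th r ^+ 2) = ((\sum_j r 0 j) / 2) ^+ 2 + inner r r / 12.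
Proof.
pose a k := oapp (fun i : 'I_d => r 0 i) 0 (insub k).
have aE (i : 'I_d) : a i = r 0 i by rewrite /a valK.
rewrite /E_theta (_ : (fun g => _) =
    (fun g : nat -> R => (0 + \sum_(i < d) a i * g i) ^+ 2)).
  rewrite unif_iter_sqr_affine add0r -!mulr_suml innerE.
  by congr (_ ^+ 2 + _ / _); [congr (_ / _) | ]; apply: eq_bigr => i _;
     rewrite aE ?expr2.
apply/funext => g; rewrite innerE add0r; congr (_ ^+ 2).
by apply: eq_bigr => i _; rewrite mxE aE mulrC.
Qed.

End InnerProduct.

Section Pseudoinverse.
Variables (R : realType) (m d : nat).
Implicit Types (E : 'M[R]_(m, d)) (q th : 'rV[R]_d).

Lemma pinv_full_row_rank E : E *m E^T \in unitmx -> is_MP_pinv E (Defs.pinv E).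
Proof.
move=> uEE; apply: (@xgetPex _ 0 [set X | is_MP_pinv E X]).
exists (E^T *m invmx (E *m E^T)); split.
- by rewrite mulmxA mulmxV // mul1mx.
- by rewrite -!mulmxA (mulmxA E) mulmxV // mulmx1.
- by rewrite mulmxA mulmxV // trmx1.
- by rewrite !trmx_mul trmxK trmx_inv trmx_mul trmxK mulmxA.
Qed.

(* [pinv E *m E] projects orthogonally onto the row space of [E], so the loss
   only sees the component [q - w E] of the query orthogonal to that space. *)
Lemma pred_loss_residual E q th (w : 'rV[R]_m) :
  E *m E^T \in unitmx -> E *m (q - w *m E)^T = 0 ->
  pred_loss E th q = inner th (q - w *m E) ^+ 2.
Proof.
move=> /pinv_full_row_rank [EXE _ _ XEsym] Er; rewrite /pred_loss; congr (_ ^+ 2).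
set X := Defs.pinv E.
have XE_Et : X *m E *m E^T = E^T by rewrite -{1}XEsym -trmx_mul mulmxA EXE.
have XEq : X *m E *m q^T = (w *m E)^T.
  rewrite -[q in q^T](subrK (w *m E)) raddfD /= mulmxDr -mulmxA Er mulmx0 add0r.
  by rewrite trmx_mul mulmxA XE_Et.
by rewrite /inner trmx_mul trmxK XEsym mulmxBl -mulmxA XEq -mulmxBr -raddfB.
Qed.

End Pseudoinverse.

Lemma ord2P (k : 'I_2) : k = 0 \/ k = 1.
Proof. by case: k => [[|[|k]] lt_k2]; [left | right |] => //; apply: val_inj. Qed.

Lemma unitmx_sym2 (R : fieldType) (G : 'M[R]_2) (a b : R) :
  (forall i j, G i j = if i == j then a else b) -> a ^+ 2 != b ^+ 2 -> G \in unitmx.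
Proof.
move=> GE ab; rewrite -subr_eq0 in ab.
pose H := \matrix_(i < 2, j < 2) ((if i == j then a else - b) / (a ^+ 2 - b ^+ 2)).
apply: (proj1 (@mulmx1_unit _ _ G H _)); apply/matrixP => i j.
rewrite !mxE !big_ord_recr big_ord0 /= !mxE !GE.
by case: (ord2P i) => ->; case: (ord2P j) => -> /=; field.
Qed.

Section PairLoss.
Variables (R : realType) (n : nat).
Local Notation e := (@Defs.indic R n).

Definition pair_loss (l g : nat) : R :=
  let c := (l%:R - 1) / (l%:R + g%:R) in
  (l%:R * (1 - 2 * c) / 2) ^+ 2 + (l%:R - 2 * c * (l%:R - 1)) / 12.

Lemma row_demo_mx2 (A B : {set 'I_n}) (k : 'I_2) :
  row k (demo_mx e [tuple A; B]) = if k == 0 then e A else e B.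
Proof. by rewrite rowK; case: (ord2P k) => ->. Qed.

(* With [u = e A], [v = e B], the projection of [q = e T] on span(u, v) is
   [c (u + v)] by symmetry, and the residual [r] has sum [l (1 - 2c)] and
   squared norm [l - 2c(l - 1)]. *)
Lemma E_theta_pred_loss_pair (A B T : {set 'I_n}) (l g : nat) :
  #|A| = l -> #|B| = l -> #|T| = l -> #|A :&: T| = l.-1 -> #|B :&: T| = l.-1 ->
  #|A :&: B| = g -> (g < l)%N ->
  E_theta (fun th => pred_loss (demo_mx e [tuple A; B]) th (e T)) = pair_loss l g.
Proof.
move=> cA cB cT cAT cBT cAB lt_gl.
have l_gt0 : (0 < l)%N by apply: leq_ltn_trans lt_gl.
have lg_neq0 : l%:R + g%:R != 0 :> R by rewrite -natrD pnatr_eq0 -lt0n addn_gt0 l_gt0.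
set E := demo_mx _ _; set u := e A; set v := e B; set q := e T.
set c := (l%:R - 1) / (l%:R + g%:R) : R.
have uu : inner u u = l%:R by rewrite inner_indic finset.setIid cA.
have vv : inner v v = l%:R by rewrite inner_indic finset.setIid cB.
have qq : inner q q = l%:R by rewrite inner_indic finset.setIid cT.
have uv : inner u v = g%:R by rewrite inner_indic cAB.
have uq : inner u q = l%:R - 1 by rewrite inner_indic cAT -subn1 natrB.
have vq : inner v q = l%:R - 1 by rewrite inner_indic cBT -subn1 natrB.
have cE : c * (l%:R + g%:R) = l%:R - 1 by rewrite /c divfK.
set r := q - c *: (u + v).
have ru : inner r u = 0.
  by rewrite /r innerBl innerZl innerDl uu (innerC v) uv (innerC q) uq -cE; ring.
have rv : inner r v = 0.
  by rewrite /r innerBl innerZl innerDl uv vv (innerC q) vq -cE; ring.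
have rr : inner r r = l%:R - 2 * c * (l%:R - 1).
  rewrite {1}/r innerBl innerZl innerDl (innerC u) (innerC v) ru rv innerC.
  by rewrite /r innerBl innerZl innerDl qq uq vq; ring.
have sum_r : \sum_j r 0 j = l%:R * (1 - 2 * c).
  rewrite (eq_bigr (fun j => q 0 j - c * (u 0 j + v 0 j))); last by move=> j _; rewrite !mxE.
  by rewrite sumrB -mulr_sumr big_split /= !sum_indic cA cB cT; ring.
have wE : const_mx c *m E = c *: (u + v).
  apply/matrixP => i j; rewrite !mxE !big_ord_recr big_ord0 /= !mxE.
  by rewrite !(tnth_nth A) /= add0r mulrDr.
have Er : E *m (q - const_mx c *m E)^T = 0.
  apply/matrixP => i j; rewrite (ord1 j) wE -/r mulmx_trmxE mxE /E row_demo_mx2.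
  by rewrite row_id innerC; case: (i == 0).
have uEE : E *m E^T \in unitmx.
  apply: (@unitmx_sym2 _ _ (l%:R) (g%:R)).
    move=> i j; rewrite mulmx_trmxE /E !row_demo_mx2 -/u -/v.
    by case: (ord2P i) => ->; case: (ord2P j) => -> //=; rewrite innerC.
  have lt_gl' : g%:R < l%:R :> R by rewrite ltr_nat.
  by rewrite eqf_sqr negb_or; apply/andP; split;
    [rewrite gt_eqF | rewrite -addr_eq0].
rewrite (_ : (fun th => _) = fun th => inner th r ^+ 2); last first.
  by apply/funext => th; rewrite (pred_loss_residual th uEE Er) wE.
by rewrite E_theta_inner_sqr sum_r rr.
Qed.

Lemma pair_loss_predn (l : nat) : (1 < l)%N -> 1 / 12 < pair_loss l l.-1 :> R.
Proof.
move=> l_gt1; rewrite /pair_loss.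
have lR : 1 < l%:R :> R by rewrite ltr1n.
rewrite -subn1 natrB ?(ltnW l_gt1) //.
set L := l%:R; set c := (L - 1) / (L + (L - 1)).
have c2 : 1 - 2 * c = 1 / (2 * L - 1) by rewrite /c; field; lra.
have pos : 0 < 1 - 2 * c by rewrite c2 divr_gt0 //; lra.
have sq : 0 <= (L * (1 - 2 * c) / 2) ^+ 2 by exact: sqr_ge0.
have : 0 < (L - 1) * (1 - 2 * c) by apply: mulr_gt0 => //; lra.
nra.
Qed.

Lemma pair_loss_pred2 (l : nat) : (1 < l)%N -> pair_loss l l.-2 = 1 / 12 :> R.
Proof.
move=> l_gt1; rewrite /pair_loss -subn2 natrB //.
have lR : 1 < l%:R :> R by rewrite ltr1n.
have -> : (l%:R - 1) / (l%:R + (l%:R - 2)) = 1 / 2 :> R by field; lra.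
by field.
Qed.

End PairLoss.

Section SetIntersections.
Variable T : finType.
Implicit Types X Y Z : {set T}.

Lemma card_setI_lt X Y k : #|X| = k -> #|Y| = k -> X != Y -> (#|X :&: Y| < k)%N.
Proof.
move=> cX cY neXY; rewrite ltnNge; apply: contra neXY => le_kXY.
have XY_X : X :&: Y = X by apply/eqP; rewrite eqEcard subsetIl cX.
have sXY : X \subset Y by rewrite -XY_X subsetIr.
by rewrite eqEcard sXY cX cY /=.
Qed.

Lemma card_setI_addn_le X Y Z : (#|X :&: Z| + #|Y :&: Z| <= #|Z| + #|X :&: Y|)%N.
Proof.
rewrite -cardsUI; apply: leq_add; apply: subset_leq_card.
  by rewrite finset.subUset !subsetIr.
by rewrite finset.setIACA subsetIl.
Qed.

End SetIntersections.

Lemma tuple2E (T : Type) (t : 2.-tuple T) : t = [tuple tnth t 0; tnth t 1].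
Proof.
by apply: eq_from_tnth => k; case: (ord2P k) => ->; rewrite (tnth_nth (tnth t 0)).
Qed.

Lemma sum_tuple2 (R : nmodType) (T : finType) (F : 2.-tuple T -> R) :
  \sum_(t : 2.-tuple T) F t = \sum_x \sum_y F [tuple x; y].
Proof.
rewrite pair_big /= (reindex (fun p : T * T => [tuple p.1; p.2])) //=.
exists (fun t => (tnth t 0, tnth t 1)) => [[x y] _ | t _] /=.
  by rewrite !(tnth_nth x).
by rewrite -tuple2E.
Qed.

Lemma mean_gt (R : realFieldType) (T : finType) (P : pred T) (F : T -> R) c t0 :
  P t0 -> c < F t0 -> (forall t, P t -> c <= F t) ->
  c < (#|[set t | P t]|%:R)^-1 * \sum_(t | P t) F t.
Proof.
move=> Pt0 lt_cF le_cF.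
have N_gt0 : (0 < #|[set t | P t]|)%N by apply/card_gt0P; exists t0; rewrite inE.
rewrite ltr_pdivlMl ?ltr0n // mulr_natl -sumr_const.
rewrite (eq_bigl P) => [|t]; last by rewrite inE.
rewrite [ltRHS](bigD1 t0) //= [ltLHS](bigD1 t0) //=.
by rewrite ltr_leD //; apply: ler_sum => t /andP[/le_cF].
Qed.

Lemma sum_uniform_le1 (R : numFieldType) (T : finType) (A : {set T}) :
  \sum_y (if y \in A then (#|A|%:R)^-1 else 0) <= 1 :> R.
Proof.
rewrite -big_mkcond sumr_const /=; have [->|A_gt0] := posnP #|A|; first by rewrite mulr0n.
by rewrite -[leLHS]mulr_natr mulVf ?pnatr_eq0 -?lt0n.
Qed.

Section GreedyPairs.
Variables (R : realType) (d : nat) (I : finType) (e : I -> 'rV[R]_d).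
Variables (D : {set I}) (q : 'rV[R]_d) (alpha : R).
Local Notation loss t := (E_theta (fun th => pred_loss (demo_mx e t) th q)).
Local Notation argmax p := (div_argmax e D q alpha p).
Local Notation weight A x := (if x \in A then (#|A|%:R)^-1 else 0 : R).

Lemma div_prob2 x y :
  div_prob e D q alpha [tuple x; y] = weight (argmax [::]) x * weight (argmax [:: x]) y.
Proof. by rewrite /div_prob !big_ord_recr big_ord0 /= mul1r !(tnth_nth x). Qed.

Lemma topkdiv_loss2_le (c : R) : 0 <= c ->
  (forall x y, x \in argmax [::] -> y \in argmax [:: x] -> loss [tuple x; y] <= c) ->
  topkdiv_loss 2 e D q alpha <= c.
Proof.
move=> c_ge0 loss_le; rewrite /topkdiv_loss sum_tuple2.
pose w x y := weight (argmax [::]) x * weight (argmax [:: x]) y.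
apply: (@le_trans _ _ (\sum_x \sum_y w x y * c)).
  apply: ler_sum => x _; apply: ler_sum => y _; rewrite div_prob2 /w.
  case: ifP => x0; last by rewrite !mul0r.
  case: ifP => y1; last by rewrite mulr0 !mul0r.
  by apply: ler_wpM2l; [rewrite mulr_ge0 ?invr_ge0 | apply: loss_le].
under eq_bigr => x _ do rewrite -mulr_suml.
rewrite -mulr_suml -[leRHS]mul1r; apply: ler_wpM2r => //.
apply: le_trans (sum_uniform_le1 _ (argmax [::])); apply: ler_sum => x _.
rewrite /w -mulr_sumr; case: ifP => _; last by rewrite mul0r.
by rewrite -[leRHS]mulr1 ler_wpM2l ?invr_ge0 // sum_uniform_le1.
Qed.

End GreedyPairs.

(* [a k + (1 - a)(l - m)] is [l] times the TopK-Div score, after a first pick,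
   of a demonstration meeting the query in [k] points and the first pick in [m]
   points; the left-hand side is the score of [k = l - 1], [m = l - 2]. *)
Lemma greedy_second_pick (R : realFieldType) (a : R) (k m l : nat) :
  1 / 2 < a -> a < 1 -> (1 < l)%N ->
  (k <= l.-1)%N -> (k + l.-1 <= l + m)%N -> (m < l)%N ->
  a * l.-1%:R + (1 - a) * 2 <= a * k%:R + (1 - a) * (l - m)%:R ->
  k = l.-1 /\ m = l.-2.
Proof.
move=> a_gt a_lt l_gt1 le_k le_km lt_ml score.
rewrite natrB ?(ltnW lt_ml) // in score.
have [lt_k | eq_k] := ltnP k l.-1.
  have : ((k + 2)%:R <= l%:R :> R) && (k%:R <= (m + 1)%:R :> R) by rewrite !ler_nat; lia.
  rewrite !natrD -subn1 natrB ?(ltnW l_gt1) // in score * => /andP[k2 km].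
  have : 0 < (2 * a - 1) * (l%:R - 1 - k%:R : R) by apply: mulr_gt0; lra.
  have : 0 <= (1 - a) * (m%:R + 1 - k%:R : R) by apply: mulr_ge0; lra.
  move=> p1 p2; exfalso; nra.
have eq_k' : k = l.-1 by lia.
split=> //; have [eq_m | ne_m] := eqVneq m l.-1; last by lia.
exfalso; move: score; rewrite eq_k' eq_m -subn1 natrB ?(ltnW l_gt1) //; lra.
Qed.

Section Instance.
Variables (R : realType) (l : nat).
Hypothesis l_ge3 : (3 <= l)%N.
Local Notation d := (Defs.dim l).
Local Notation FH := (first_half l).
Local Notation SH := (second_half l).
Local Notation D := (demo_set l).
Local Notation e := (@Defs.indic R d).

Let l_gt0 : (0 < l)%N. Proof. by apply: leq_trans l_ge3. Qed.
Let l_gt1 : (1 < l)%N. Proof. by apply: leq_trans l_ge3. Qed.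

Lemma halves_disjoint (X Y : {set 'I_d}) :
  X \subset FH -> Y \subset SH -> [disjoint X & Y].
Proof.
move=> sX sY; apply: disjointWl sX _; apply: disjointWr sY _.
by rewrite disjoint_subset; apply/fintype.subsetP => i; rewrite !inE -ltnNge.
Qed.

Lemma notin_first_half (s : 'I_d) (X : {set 'I_d}) :
  s \in SH -> X \subset FH -> s \notin X.
Proof.
rewrite inE => ge_s /fintype.subsetP sX.
by apply/negP => /sX; rewrite inE ltnNge ge_s.
Qed.

Lemma demo_setP (X : {set 'I_d}) : X \in D ->
  exists T1 T2,
    [/\ X = T1 :|: T2, T1 \subset FH, #|T1| = l.-1, T2 \subset SH & #|T2| = 1%N].
Proof.
case/imset2P => T1 T2; rewrite !inE => /andP[s1 /eqP c1] /andP[s2 /eqP c2] ->.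
by exists T1, T2.
Qed.

Lemma card_demo (X : {set 'I_d}) : X \in D -> #|X| = l.
Proof.
case/demo_setP => T1 [T2 [-> s1 c1 s2 c2]].
rewrite cardsU (disjoint_setI0 (halves_disjoint s1 s2)) cards0 subn0 c1 c2.
by rewrite addn1 prednK.
Qed.

Lemma card_demo_setI_le (X T : {set 'I_d}) :
  X \in D -> T \subset FH -> (#|X :&: T| <= l.-1)%N.
Proof.
case/demo_setP => T1 [T2 [-> s1 c1 s2 c2]] sT.
rewrite finset.setIUl (finset.setIC T2) (disjoint_setI0 (halves_disjoint sT s2)).
rewrite finset.setU0 -c1.
exact/subset_leq_card/subsetIl.
Qed.

Lemma two_in_second_half : exists a b : 'I_d, [/\ a \in SH, b \in SH & a != b].
Proof.
have lt_a : (2 * l < d)%N by rewrite /Defs.dim; lia.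
have lt_b : ((2 * l).+1 < d)%N by rewrite /Defs.dim; lia.
exists (Ordinal lt_a), (Ordinal lt_b); split; rewrite ?inE //=.
by apply/eqP => /(congr1 val) /=; lia.
Qed.

Variable Tq : {set 'I_d}.
Hypotheses (Tq_sub : Tq \subset FH) (card_Tq : #|Tq| = l).
Local Notation q := (Defs.indic R Tq).
Local Notation loss t := (E_theta (fun th => pred_loss (demo_mx e t) th q)).

Lemma simq_demo x : x \in D -> simq e q x = #|x :&: Tq|%:R / l%:R.
Proof. by move=> Dx; rewrite /simq (@Sim_indic _ _ _ _ l) ?(card_demo Dx). Qed.

Lemma simq_demo_le x y : x \in D -> y \in D ->
  (simq e q x <= simq e q y) = (#|x :&: Tq| <= #|y :&: Tq|)%N.
Proof. by move=> Dx Dy; rewrite !simq_demo // ler_pM2r ?ler_nat // invr_gt0 ltr0n. Qed.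

Lemma loss_demo_pair x y g : x \in D -> y \in D ->
  #|x :&: Tq| = l.-1 -> #|y :&: Tq| = l.-1 -> #|x :&: y| = g -> (g < l)%N ->
  loss [tuple x; y] = pair_loss R l g.
Proof.
by move=> Dx Dy; apply: E_theta_pred_loss_pair; rewrite ?(card_demo Dx) ?(card_demo Dy).
Qed.

(* The demonstrations closest to the query: [Tq] with one point traded for a
   point of the second half. *)
Definition near_demo (i s : 'I_d) : {set 'I_d} := (Tq :\ i) :|: [set s].

Lemma card_query_D1 i : i \in Tq -> #|Tq :\ i| = l.-1.
Proof.
by move=> Tq_i; have := cardsD1 i Tq; rewrite Tq_i card_Tq add1n => /(congr1 predn) ->.
Qed.

Lemma near_demo_in i s : i \in Tq -> s \in SH -> near_demo i s \in D.
Proof.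
move=> Tq_i SH_s; apply/imset2P; exists (Tq :\ i) [set s] => //; rewrite inE.
  by rewrite (fintype.subset_trans (subsetDl _ _) Tq_sub) card_query_D1 ?eqxx.
by rewrite finset.sub1set SH_s cards1 eqxx.
Qed.

Lemma card_near_demo_query i s :
  i \in Tq -> s \in SH -> #|near_demo i s :&: Tq| = l.-1.
Proof.
move=> Tq_i SH_s; rewrite finset.setIUl (finset.setIC [set s]).
rewrite (disjoint_setI0 (halves_disjoint Tq_sub _)) ?finset.sub1set //.
by rewrite finset.setU0 (finset.setIidPl (subsetDl _ _)) card_query_D1.
Qed.

Lemma near_demo_neq i a b :
  a \in SH -> b \in SH -> a != b -> near_demo i a != near_demo i b.
Proof.
move=> SH_a SH_b ne_ab; apply: contraNneq (notin_first_half SH_a Tq_sub) => eq_ab.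
have : a \in near_demo i b by rewrite -eq_ab !inE eqxx orbT.
by rewrite !inE (negbTE ne_ab) orbF => /andP[].
Qed.

Lemma card_near_demo_pair i a b : i \in Tq -> a \in SH -> b \in SH -> a != b ->
  #|near_demo i a :&: near_demo i b| = l.-1.
Proof.
move=> Tq_i SH_a SH_b ne_ab.
have [Da Db] := (near_demo_in Tq_i SH_a, near_demo_in Tq_i SH_b).
have := card_setI_lt (card_demo Da) (card_demo Db) (near_demo_neq i SH_a SH_b ne_ab).
have : (#|Tq :\ i| <= #|near_demo i a :&: near_demo i b|)%N.
  by apply/subset_leq_card/fintype.subsetP => x; rewrite !inE => /andP[-> ->].
by rewrite card_query_D1 //; lia.
Qed.

Lemma query_has_elem : exists i, i \in Tq.
Proof. by apply/card_gt0P; rewrite card_Tq. Qed.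

Lemma exists_near_demo_apart x : x \in D -> #|x :&: Tq| = l.-1 ->
  exists i s,
    [/\ i \in Tq, s \in SH, near_demo i s != x & #|near_demo i s :&: x| = l.-2].
Proof.
move=> Dx cx.
have [i xTq_i] : exists i, i \in x :&: Tq by apply/card_gt0P; rewrite cx; lia.
have [s [SH_s x_s]] : exists s, s \in SH /\ s \notin x.
  have [a [b [SH_a SH_b ne_ab]]] := two_in_second_half.
  case/demo_setP: Dx => T1 [T2 [eq_x s1 _ _ c2]].
  have x_T2 y : y \in SH -> y \in x -> y \in T2.
    by move=> SH_y; rewrite eq_x inE (negbTE (notin_first_half SH_y s1)).
  have [x_a | ] := boolP (a \in x); last by exists a.
  have [x_b | ] := boolP (b \in x); last by exists b.
  have : [set a; b] \subset T2.
    by apply/fintype.subsetP => y; rewrite !inE => /orP[] /eqP ->; exact: x_T2.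
  by move/subset_leq_card; rewrite cards2 ne_ab c2.
exists i, s; split=> //.
- by move: xTq_i; rewrite inE => /andP[].
- by apply: contraNneq x_s => <-; rewrite !inE eqxx orbT.
have -> : near_demo i s :&: x = (x :&: Tq) :\ i.
  apply/setP => y; rewrite !inE.
  have [-> | _] := eqVneq y s; first by rewrite (negbTE x_s) !andbF.
  by rewrite orbF; case: (y != i); case: (y \in x); case: (y \in Tq).
by have := cardsD1 i (x :&: Tq); rewrite xTq_i cx; lia.
Qed.

Lemma exists_max_demo_notin (t : 2.-tuple {set 'I_d}) x :
  x \in t -> (#|x :&: Tq| < l.-1)%N -> exists w, [/\ w \in D, w \notin t & #|w :&: Tq| = l.-1].
Proof.
move=> t_x lt_x.
have [i Tq_i] := query_has_elem; have [a [b [SH_a SH_b ne_ab]]] := two_in_second_half.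
have ne_x s : s \in SH -> near_demo i s != x.
  by move=> SH_s; apply: contraTneq lt_x => <-; rewrite card_near_demo_query ?ltnn.
have good s : s \in SH -> near_demo i s \in D /\ #|near_demo i s :&: Tq| = l.-1.
  by move=> SH_s; rewrite near_demo_in ?card_near_demo_query.
have [t_a | ] := boolP (near_demo i a \in t); last by exists (near_demo i a); case: (good a).
have [t_b | ] := boolP (near_demo i b \in t); last by exists (near_demo i b); case: (good b).
move: t_x t_a t_b (ne_x a SH_a) (ne_x b SH_b) (near_demo_neq i SH_a SH_b ne_ab).
by rewrite (tuple2E t) !inE => /orP[] /eqP -> /orP[] /eqP -> /orP[] /eqP ->; rewrite ?eqxx.
Qed.

Lemma topk_valid_overlap (t : 2.-tuple {set 'I_d}) x :
  topk_valid e D q t -> x \in t -> #|x :&: Tq| = l.-1.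
Proof.
case/and3P=> _ /allP Dt /forallP max_t t_x; have Dx := Dt x t_x.
apply/eqP; rewrite eqn_leq card_demo_setI_le //= leqNgt; apply/negP => lt_x.
have [w [Dw t'w cw]] := exists_max_demo_notin t_x lt_x.
move: (max_t w); rewrite Dw t'w /= => /allP /(_ x t_x).
by rewrite simq_demo_le // cw leqNgt lt_x.
Qed.

Lemma topk_valid_loss_ge (t : 2.-tuple {set 'I_d}) :
  topk_valid e D q t -> 1 / 12 <= loss t.
Proof.
move=> valid_t; have /and3P[uniq_t /allP Dt _] := valid_t.
have [t_x t_y] := (mem_tnth 0 t, mem_tnth 1 t).
set x := tnth t 0 in t_x *; set y := tnth t 1 in t_y *.
have [Dx Dy] := (Dt x t_x, Dt y t_y).
have [cx cy] := (topk_valid_overlap valid_t t_x, topk_valid_overlap valid_t t_y).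
have ne_xy : x != y by move: uniq_t; rewrite (tuple2E t) /= inE andbT.
have := card_setI_lt (card_demo Dx) (card_demo Dy) ne_xy.
have := card_setI_addn_le x y Tq; rewrite cx cy card_Tq => ge_g lt_g.
rewrite [in demo_mx _ t](tuple2E t) -/x -/y.
have [eq_g | eq_g] : #|x :&: y| = l.-1 \/ #|x :&: y| = l.-2 by lia.
- by rewrite (loss_demo_pair Dx Dy cx cy eq_g) ?ltW ?pair_loss_predn //; lia.
- by rewrite (loss_demo_pair Dx Dy cx cy eq_g) ?pair_loss_pred2 //; lia.
Qed.

Lemma topk_loss_gt : 1 / 12 < topk_loss 2 e D q.
Proof.
have [i Tq_i] := query_has_elem; have [a [b [SH_a SH_b ne_ab]]] := two_in_second_half.
have [Dx Dy] := (near_demo_in Tq_i SH_a, near_demo_in Tq_i SH_b).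
have [cx cy] := (card_near_demo_query Tq_i SH_a, card_near_demo_query Tq_i SH_b).
apply: (@mean_gt _ _ _ _ _ [tuple near_demo i a; near_demo i b]).
- rewrite /topk_valid /= inE near_demo_neq // Dx Dy /=.
  apply/forallP => z; apply/implyP => Dz; apply/implyP => _.
  by rewrite /= !simq_demo_le // cx cy card_demo_setI_le.
- rewrite (loss_demo_pair Dx Dy cx cy (card_near_demo_pair Tq_i SH_a SH_b ne_ab)).
    by rewrite pair_loss_predn.
  by rewrite prednK ?leqnn.
- exact: topk_valid_loss_ge.
Qed.

Variable alpha : R.
Hypotheses (alpha_gt : 1 / 2 < alpha) (alpha_lt : alpha < 1).
Local Notation argmax p := (div_argmax e D q alpha p).

Lemma div_argmax_nil x : x \in argmax [::] -> x \in D /\ #|x :&: Tq| = l.-1.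
Proof.
rewrite inE => /andP[]; rewrite !inE => /andP[_ Dx] /forallP best_x; split=> //.
have [i Tq_i] := query_has_elem; have [a [_ [SH_a _ _]]] := two_in_second_half.
have Dw := near_demo_in Tq_i SH_a.
have alpha_gt0 : 0 < alpha by apply: lt_trans alpha_gt; rewrite divr_gt0.
move: (best_x (near_demo i a)); rewrite !inE Dw andbT /= /div_score /= !mulr0 !addr0.
rewrite ler_pM2l // simq_demo_le // card_near_demo_query // => le_w.
by apply/eqP; rewrite eqn_leq le_w card_demo_setI_le.
Qed.

Lemma div_score_single x0 z : x0 \in D -> z \in D ->
  div_score e q alpha [:: x0] z =
  (alpha * #|z :&: Tq|%:R + (1 - alpha) * (l - #|z :&: x0|)%:R) / l%:R.
Proof.
move=> Dx0 Dz; have le_m : (#|z :&: x0| <= l)%N.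
  by have := subset_leq_card (subsetIl z x0); rewrite (card_demo Dz).
rewrite /div_score /= big_seq1 invr1 mul1r simq_demo //.
rewrite (Sim_indic R (card_demo Dz) (card_demo Dx0)) // natrB //.
by field; rewrite pnatr_eq0 -lt0n.
Qed.

Lemma div_argmax_single x0 y :
  x0 \in D -> #|x0 :&: Tq| = l.-1 -> y \in argmax [:: x0] ->
  [/\ y \in D, #|y :&: Tq| = l.-1 & #|y :&: x0| = l.-2].
Proof.
move=> Dx0 cx0; rewrite inE => /andP[]; rewrite !inE => /andP[ne_y Dy] /forallP best_y.
have [i [s [Tq_i SH_s ne_w cw]]] := exists_near_demo_apart Dx0 cx0.
have Dw := near_demo_in Tq_i SH_s.
move: (best_y (near_demo i s)); rewrite !inE Dw ne_w /= !div_score_single //.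
rewrite card_near_demo_query // cw ler_pM2r ?invr_gt0 ?ltr0n //.
rewrite (_ : (l - l.-2)%N = 2); last by lia.
move=> score; have := card_setI_addn_le y x0 Tq; rewrite cx0 card_Tq => ge_km.
have lt_m := card_setI_lt (card_demo Dy) (card_demo Dx0) ne_y.
have le_k := card_demo_setI_le Dy Tq_sub.
by have [] := greedy_second_pick alpha_gt alpha_lt l_gt1 le_k ge_km lt_m score.
Qed.

Lemma topkdiv_loss_le : topkdiv_loss 2 e D q alpha <= 1 / 12.
Proof.
apply: topkdiv_loss2_le => // x y /div_argmax_nil [Dx cx].
move=> /(div_argmax_single Dx cx) [Dy cy cyx].
rewrite (loss_demo_pair Dx Dy cx cy (_ : #|x :&: y| = l.-2)) ?pair_loss_pred2 //.
  by rewrite finset.setIC.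
by lia.
Qed.

End Instance.

Lemma query_set_nonempty l : exists T, T \in query_set l.
Proof.
have le_ld : (l <= Defs.dim l)%N by rewrite /Defs.dim; lia.
exists (widen_ord le_ld @: [set: 'I_l]); rewrite inE; apply/andP; split.
  apply/fintype.subsetP => _ /imsetP [j _ ->]; rewrite inE /=.
  by have := ltn_ord j; lia.
rewrite finset.card_imset ?finset.cardsT ?card_ord //.
by move=> i j /(congr1 val) /= /val_inj.
Qed.

Theorem theorem2 (R : realType) (l : nat) (alpha : R) :
  (3 <= l)%N ->
  1 - (l%:R)^-1 <= alpha -> alpha < 1 ->
  L_topkdiv l alpha < L_topk R l.
Proof.
move=> l_ge3 alpha_ge alpha_lt.
have alpha_gt : 1 / 2 < alpha.
  have l3 : 3 <= l%:R :> R by rewrite (ler_nat R 3).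
  have : (l%:R)^-1 <= 3^-1 :> R by rewrite lef_pV2 ?posrE //; lra.
  lra.
have [T0 QT0] := query_set_nonempty l.
rewrite ltr_pM2l ?invr_gt0 ?ltr0n; last by apply/card_gt0P; exists T0.
apply: ltr_sum; first by apply/hasP; exists T0; rewrite ?mem_index_enum.
move=> T; rewrite inE => /andP[sT /eqP cT].
apply: le_lt_trans (topkdiv_loss_le l_ge3 sT cT alpha_gt alpha_lt) _.
exact: topk_loss_gt.
Qed.
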